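(* Let $\mathfrak{I}=(\mathcal{I},\mathcal{F},\pi)$ be a feature-enriched interpretation and let $A_1,A_2,B_1,B_2$ be natural concepts in $\mathfrak{I}$. Suppose that the analogical proportion $\varphi(A_1):\varphi(A_2)::\varphi(B_1):\varphi(B_2)$ holds and that $\mathfrak{I}$ satisfies the concept inclusion $A_1\sqsubseteq B_1$. Then $\mathfrak{I}$ also satisfies $A_2\sqsubseteq B_2$.
   Context: A feature-enriched interpretation is a tuple $\mathfrak{I}=(\mathcal{I},\mathcal{F},\pi)$ where $\mathcal{I}=(\Delta^{\mathcal{I}},\cdot^{\mathcal{I}})$ is a classical description logic interpretation, $\mathcal{F}$ is a finite set of features, and $\pi:\Delta^{\mathcal{I}}\to 2^{\mathcal{F}}$ satisfies: (1) $\pi(d)\subsetneq\mathcal{F}$ for every $d\in\Delta^{\mathcal{I}}$; (2) for every $F\subsetneq\mathcal{F}$ there is $d\in\Delta^{\mathcal{I}}$ with $\pi(d)=F$. For a concept $C$, $\varphi(C)=\bigcap\{\pi(d)\mid d\in C^{\mathcal{I}}\}$ (so $\varphi(C)=\mathcal{F}$ if $C^{\mathcal{I}}=\emptyset$). A concept $N$ is natural in $\mathfrak{I}$ when it is fully specified by its features, i.e. $N^{\mathcal{I}}=\{d\in\Delta^{\mathcal{I}}\mid \varphi(N)\subseteq\pi(d)\}$. $\mathfrak{I}$ satisfies a concept inclusion $C\sqsubseteq D$ if $C^{\mathcal{I}}\subseteq D^{\mathcal{I}}$. For sets $S_1,S_2,S_3,S_4$, the analogical proportion $S_1:S_2::S_3:S_4$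 holds iff $S_1\setminus S_2=S_3\setminus S_4$ and $S_2\setminus S_1=S_4\setminus S_3$. *)

From mathcomp Require Import all_boot.
From mathcomp Require Import boolp classical_sets.
Set Implicit Arguments. Unset Strict Implicit. Unset Printing Implicit Defensive.
Local Open Scope classical_set_scope.

(* Domain: a type D (Delta^I).  Features: a finite type F; the feature set
   \mathcal{F} is the whole of F (setT).  A concept C is represented by its
   extension C^I : set D.  pi : D -> set F. *)

(* (1) pi d is a proper subset of F; (2) every proper subset is some pi d.
   The domain of a classical DL interpretation is nonempty. *)
Definition feature_enriched (D : Type) (F : finType) (pi : D -> set F) : Prop :=
  [/\ (exists d : D, True),
      (forall d, pi d `<` [set: F]) &
      (forall S : set F, S `<` [set: F] -> exists d, pi d = S)].

(* phi(C) = intersection of pi(d) over d in C^I (= F when C^I is empty). *)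
Definition phi (D : Type) (F : finType) (pi : D -> set F) (C : set D) : set F :=
  \bigcap_(d in C) pi d.

Definition natural (D : Type) (F : finType) (pi : D -> set F) (C : set D) : Prop :=
  C = [set d | phi pi C `<=` pi d].

Definition satisfies_ci (D : Type) (C E : set D) : Prop := C `<=` E.

Definition analogy (T : Type) (S1 S2 S3 S4 : set T) : Prop :=
  S1 `\` S2 = S3 `\` S4 /\ S2 `\` S1 = S4 `\` S3.

From mathcomp Require Import all_boot.
From mathcomp Require Import boolp classical_sets.
Set Implicit Arguments. Unset Strict Implicit. Unset Printing Implicit Defensive.
Local Open Scope classical_set_scope.

(* For natural concepts, inclusion of extensions is equivalent to reverse
   inclusion of feature sets, so it suffices to show phi B2 <= phi A2.  This is
   a fact about analogical proportions of arbitrary sets: the proportion says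
   that S1, S2 and S3, S4 differ by the same features, so S3 <= S1 forces
   S4 <= S2. *)

Lemma analogy_subset (T : Type) (S1 S2 S3 S4 : set T) :
  analogy S1 S2 S3 S4 -> S3 `<=` S1 -> S4 `<=` S2.
Proof.
move=> [D12 D21] S31 x S4x; apply: contrapT => notS2x.
have [S3x | notS3x] := pselect (S3 x).
- have : (S1 `\` S2) x by split => //; exact: S31.
  by rewrite D12 => -[].
- have : (S4 `\` S3) x by [].
  by rewrite -D21 => -[].
Qed.

Section Features.
Variables (D : Type) (F : finType) (pi : D -> set F).

Lemma phi_subset (C E : set D) : C `<=` E -> phi pi E `<=` phi pi C.
Proof. by move=> CE; apply: sub_bigcap => d Cd; apply: bigcap_inf; exact: CE. Qed.

Lemma natural_subset (C E : set D) :
  natural pi E -> phi pi E `<=` phi pi C -> C `<=` E.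
Proof.
move=> natE EC d Cd; rewrite natE /=.
by move=> x /EC; apply: bigcap_inf.
Qed.

End Features.

Theorem proposition1 (D : Type) (F : finType) (pi : D -> set F)
  (A1 A2 B1 B2 : set D) :
  feature_enriched pi ->
  natural pi A1 -> natural pi A2 -> natural pi B1 -> natural pi B2 ->
  analogy (phi pi A1) (phi pi A2) (phi pi B1) (phi pi B2) ->
  satisfies_ci A1 B1 ->
  satisfies_ci A2 B2.
Proof.
move=> _ _ _ _ natB2 analogyAB A1B1.
apply: natural_subset natB2 _.
exact: analogy_subset analogyAB (phi_subset A1B1).
Qed.
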